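(* Let $c\in[0,1)$, $b(c)=\tfrac12-c$, $f_c(x)=\log|\cos\pi(x+c)|$, and suppose $\chi_-(f_c,T(b(c)))>-\infty$. Then there is a constant $K>0$ such that for every $x\in\mathbb T$, either $T^n(x)=b(c)$ for some $n\ge0$, or $\chi_+(f_c,x)>-K$. Consequently $\alpha(c):=\inf_{\mu\in\mathcal M_T}\int f_c\,d\mu\ge -K$.
   Context: $\mathbb T=\mathbb R/\mathbb Z$, $Tx=2x\bmod1$, $\mathcal M_T$ the set of $T$-invariant Borel probability measures. $\chi_-(f_c,x)=\liminf_{n\to\infty}\frac1n\sum_{i=0}^{n-1}f_c(T^ix)$ and $\chi_+(f_c,x)=\limsup_{n\to\infty}\frac1n\sum_{i=0}^{n-1}f_c(T^ix)$. Convention $\log0=-\infty$. *)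

From HB Require Import structures.
From mathcomp Require Import all_boot all_order all_algebra.
From mathcomp Require Import all_classical all_reals all_analysis.
Set Implicit Arguments. Unset Strict Implicit. Unset Printing Implicit Defensive.
Import Order.TTheory GRing.Theory Num.Theory.
Local Open Scope ring_scope.
Local Open Scope classical_set_scope.

(* The circle T = R/Z is represented by the real line; a point of T is      *)
(* represented by its canonical representative frac x in [0,1).            *)
Definition frac {R : realType} (x : R) : R := x - (Num.floor x)%:~R.

Definition Tdbl {R : realType} (x : R) : R := frac (2 * x).

Definition bpt {R : realType} (c : R) : R := frac (2^-1 - c).

Definition fc {R : realType} (c : R) (x : R) : \bar R :=
  if cos (pi * (x + c)) == 0 then -oo%E else (ln `|cos (pi * (x + c))|)%:E.

Definition birkhoff {R : realType} (f : R -> \bar R) (x : R) (n : nat) : \bar R :=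
  ((n%:R)^-1)%:E * (\sum_(i < n) f (iter i Tdbl x))%E.

Definition chi_minus {R : realType} (f : R -> \bar R) (x : R) : \bar R :=
  limn_einf (birkhoff f x).
Definition chi_plus {R : realType} (f : R -> \bar R) (x : R) : \bar R :=
  limn_esup (birkhoff f x).

(* invariant under Tdbl is automatically concentrated on [0,1)             *)
(* (Tdbl^-1 [0,1) = R), so these are exactly the invariant measures on T.  *)
Definition invariant_prob {R : realType} (mu : probability R R) : Prop :=
  forall A : set R, measurable A -> mu (Tdbl @^-1` A) = mu A.

Definition alpha {R : realType} (c : R) : \bar R :=
  ereal_inf [set (\int[mu]_x fc c x)%E | mu in [set mu : probability R R | invariant_prob mu]].

(* Let b = b(c) and a_j = |cos pi (T^(j+1) b + c)|, so that f_c = ln |cos pi (. + c)|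
   and the hypothesis on chi_-(f_c, T b) says that a_j > 0 and that the sums
   ln a_0 + ... + ln a_(n-1) are >= -C n.  Since |cos pi (y + c)| = |sin pi (y - b)|
   and |sin pi (u - v)| at most doubles under T, a point y with |cos pi (y + c)| <= e^t
   shadows the orbit of b: |cos pi (T^(j+1) y + c)| >= a_j / 2 for j < p, where
   p ~ -t / (ln 2 + C).  The low value f_c(y) <= t is thus paid for by a block of
   length p + 1 whose Birkhoff sum is >= -K (p + 1), with K = 2 (ln 2 + C).
   Concatenating blocks, the Birkhoff sums along an orbit avoiding b are >= -K n
   infinitely often, hence chi_+ >= -K.  For the truncations max(f_c, -M) the same
   blocks give sums >= -M - K n everywhere; integrating against an invariant measure
   yields an integral >= -K, and monotone convergence in M passes to f_c. *)

From Pilot Require Import Defs.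
From HB Require Import structures.
From mathcomp Require Import all_boot all_order all_algebra.
From mathcomp Require Import all_classical all_reals all_analysis.
From mathcomp Require Import measurable_realfun.
From mathcomp Require Import ring lra.
Import Order.TTheory GRing.Theory Num.Theory.
Local Open Scope ring_scope.
Local Open Scope classical_set_scope.

Lemma norm_alternatingz (U : zmodType) (V : numDomainType) (f : U -> V) (T : U) :
  alternating f T -> forall (k : int) (a : U), `|f (a + T *~ k)| = `|f a|.
Proof.
move=> fT k a; have fTn n b : `|f (b + T *+ n)| = `|f b|.
  by rewrite alternatingn // normrM normrX normrN1 expr1n mul1r.
case: k => n; first exact: fTn.
by rewrite NegzE mulrNz -(fTn n.+1) addrNK.
Qed.

Lemma norm_sin_addpiz {R : realType} (x : R) (k : int) :
  `|sin (x + pi * k%:~R)| = `|sin x|.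
Proof. by rewrite mulrzr norm_alternatingz //; exact: sinDpi. Qed.

Lemma norm_cos_le {R : realType} (a b : R) :
  `|cos a| <= `|cos b| + `|sin (a - b)|.
Proof.
rewrite -{1}(subrK b a) cosD.
apply: (le_trans (ler_normB _ _)); rewrite !normrM.
by apply: lerD; [rewrite ler_piMl ?cos_max | rewrite ler_piMr ?sin_max].
Qed.

Lemma norm_sin_pi_gt0 {R : realType} (w : R) :
  0 < `|w| < 1 -> 0 < `|sin (pi * w)|.
Proof.
have sin_pos v : 0 < v < 1 -> 0 < sin (pi * v).
  move=> /andP[v0 v1]; apply: sin_gt0_pi.
  by rewrite mulr_gt0 ?pi_gt0 //= -[X in _ < X]mulr1 ltr_pM2l ?pi_gt0.
have [w0|w0] := leP 0 w; rewrite ?(ger0_norm w0) ?(ltr0_norm w0) => /sin_pos.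
  by rewrite normr_gt0 => /lt0r_neq0.
by rewrite mulrN sinN normr_gt0 -oppr_eq0 => /lt0r_neq0.
Qed.

Definition sdist {R : realType} (u v : R) : R := `|sin (pi * (u - v))|.

Definition cosc {R : realType} (c u : R) : R := `|cos (pi * (u + c))|.

Section circle.
Context {R : realType}.
Implicit Types c u v x : R.

Lemma sdistC u v : sdist u v = sdist v u.
Proof. by rewrite /sdist -opprB mulrN sinN normrN. Qed.

Lemma frac_ge0 x : 0 <= Defs.frac x.
Proof. by rewrite subr_ge0 floor_le. Qed.

Lemma frac_lt1 x : Defs.frac x < 1.
Proof. by rewrite ltrBlDl -intrD1 floorD1_gt. Qed.

Lemma iter_Tdbl_itv k x : 0 <= x < 1 -> 0 <= iter k Tdbl x < 1.
Proof. by case: k => [//|k] _; rewrite /= frac_ge0 frac_lt1. Qed.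

Lemma sdist_Tdbl u v : sdist (Tdbl u) (Tdbl v) <= 2 * sdist u v.
Proof.
rewrite /sdist /Tdbl /Defs.frac.
have -> : pi * (2 * u - (Num.floor (2 * u))%:~R - (2 * v - (Num.floor (2 * v))%:~R))
  = (pi * (u - v)) *+ 2 + pi * (Num.floor (2 * v) - Num.floor (2 * u))%:~R.
  by rewrite intrB; ring.
rewrite norm_sin_addpiz sin_mulr2n normrMn normrM mulr2n.
have := cos_max (pi * (u - v)); have := normr_ge0 (sin (pi * (u - v))); nra.
Qed.

Lemma sdist_iter_Tdbl k u v :
  sdist (iter k Tdbl u) (iter k Tdbl v) <= 2 ^+ k * sdist u v.
Proof.
elim: k => [|k IH] /=; first by rewrite mul1r.
by rewrite (le_trans (sdist_Tdbl _ _)) // exprS -mulrA ler_pM2l.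
Qed.

Lemma sdist_eq0 u v : 0 <= u < 1 -> 0 <= v < 1 -> sdist u v = 0 -> u = v.
Proof.
move=> /andP[u0 u1] /andP[v0 v1] duv; have [//|uv] := eqVneq u v.
suff : 0 < sdist u v by rewrite duv ltxx.
apply: norm_sin_pi_gt0.
by rewrite normr_gt0 subr_eq0 uv ltr_norml; apply/andP; split; lra.
Qed.

Lemma cosc_bpt c u : cosc c u = sdist u (bpt c).
Proof.
rewrite /cosc /sdist /bpt /Defs.frac.
have -> : pi * (u - (2^-1 - c - (Num.floor (2^-1 - c))%:~R))
  = (pi * (u + c) - pi / 2) + pi * (Num.floor (2^-1 - c))%:~R by ring.
by rewrite norm_sin_addpiz sinBpihalf normrN.
Qed.

Lemma cosc_ge0 c u : 0 <= cosc c u. Proof. exact: normr_ge0. Qed.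

Lemma cosc_le1 c u : cosc c u <= 1. Proof. exact: cos_max. Qed.

Lemma cosc_eq0 c u : 0 <= u < 1 -> cosc c u = 0 -> u = bpt c.
Proof.
by move=> u01; rewrite cosc_bpt; apply: sdist_eq0; rewrite ?frac_ge0 ?frac_lt1.
Qed.

Lemma cosc_orbit_gt0 c x : 0 <= x < 1 ->
  ~ (exists n, iter n Tdbl x = bpt c) -> forall k, 0 < cosc c (iter k Tdbl x).
Proof.
move=> x01 avoid k; rewrite lt0r cosc_ge0 andbT; apply/eqP => ck0.
by apply: avoid; exists k; exact: cosc_eq0 _ _ (iter_Tdbl_itv _ _ x01) ck0.
Qed.

Lemma cosc_iter_bpt_le c k y :
  cosc c (iter k Tdbl (bpt c)) <= cosc c (iter k Tdbl y) + 2 ^+ k * cosc c y.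
Proof.
apply: (le_trans (norm_cos_le _ (pi * (iter k Tdbl y + c)))); rewrite lerD2l.
rewrite -mulrBr opprD addrACA subrr addr0 -/(sdist _ _) sdistC cosc_bpt.
exact: sdist_iter_Tdbl.
Qed.

End circle.

Definition birkhoff_sum {T : Type} {R : nmodType} (f : T -> T) (phi : T -> R)
    (x : T) (n : nat) : R :=
  \sum_(k < n) phi (iter k f x).

Section birkhoff_sum.
Context {T : Type} {R : realDomainType} (f : T -> T) (phi : T -> R).
Local Notation S := (birkhoff_sum f phi).

Lemma birkhoff_sum0 x : S x 0 = 0.
Proof. exact: big_ord0. Qed.

Lemma birkhoff_sumD x m n : S x (m + n) = S x m + S (iter m f x) n.
Proof.
rewrite /birkhoff_sum big_split_ord /=; congr (_ + _).
by apply: eq_bigr => i _; rewrite -iterD addnC.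
Qed.

Lemma birkhoff_sum_nonincreasing x :
  (forall y, phi y <= 0) -> nonincreasing_seq (S x).
Proof.
move=> phi_le0; apply/nonincreasing_seqP => n.
by rewrite -addn1 birkhoff_sumD gerDl /birkhoff_sum big_ord1.
Qed.

Lemma birkhoff_sum_ge_of_blocks (M K : R) : 0 <= M ->
  (forall x, exists2 m, (0 < m)%N &
     - K * m%:R <= S x m /\
     forall i, (0 < i <= m)%N -> - M - K * i%:R <= S x i) ->
  forall n x, - M - K * n%:R <= S x n.
Proof.
move=> M0 blocks; elim/ltn_ind => n IH x.
have [m m0 [Sm Si]] := blocks x.
have [nm|mn] := leqP n m.
  case: n IH nm => [|n] _ nm; last by apply: Si.
  by rewrite birkhoff_sum0 mulr0 subr0 oppr_le0.
rewrite -(subnKC (ltnW mn)) birkhoff_sumD natrD.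
have := IH (n - m)%N _ (iter m f x); rewrite ltn_subrL m0 (leq_trans m0 (ltnW mn)).
by move=> /(_ isT); lra.
Qed.

Lemma birkhoff_sum_frequently_ge (K : R) x :
  (forall n, exists2 m, (0 < m)%N & - K * m%:R <= S (iter n f x) m) ->
  forall N, exists2 n, (N <= n)%N & - K * n%:R <= S x n.
Proof.
move=> blocks; elim => [|N [n Nn Sn]].
  by exists 0%N; rewrite // birkhoff_sum0 mulr0.
have [m m0 Sm] := blocks n.
exists (n + m)%N; first by rewrite -addn1 leq_add.
by rewrite birkhoff_sumD natrD; lra.
Qed.

End birkhoff_sum.

Lemma nonincreasing_linear_lbound {R : realDomainType} (s : R ^nat) (r : R) (N : nat) :
  nonincreasing_seq s -> s 0%N = 0 ->
  (forall k, (N <= k)%N -> r * k%:R <= s k) ->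
  exists2 C, 0 <= C & forall n, - C * n%:R <= s n.
Proof.
move=> s_ni s0 s_ge; exists (`|r| * N.+1%:R); first exact: mulr_ge0.
have key (a b : R) : 0 <= a -> a <= b -> - (`|r| * b) <= r * a.
  move=> a0 ab; have : - `|r| <= r by apply: lerNnormlW.
  have := normr_ge0 r; nra.
case=> [|n]; first by rewrite s0 mulr0.
rewrite mulNr -mulrA; have [Nn|nN] := leqP N n.+1.
  by apply: le_trans (s_ge _ Nn); apply: key; rewrite ?ler0n ?ler_peMl ?ler1n.
apply: le_trans (s_ni _ _ (ltnW nN)); apply: le_trans (s_ge _ (leqnn N)).
apply: key; rewrite ?ler0n // -natrM ler_nat.
by apply: leq_trans (leqnSn N) _; rewrite leq_pmulr.
Qed.

Lemma le_of_forall_natmul_le {R : archiRealFieldType} (r M K : R) :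
  (forall n : nat, r * n%:R <= M + K * n%:R) -> r <= K.
Proof.
move=> h; rewrite leNgt; apply/negP => Kr.
have rK : 0 < r - K by rewrite subr_gt0.
have := h (Num.truncn (M / (r - K))).+1; have := truncnS_gt (M / (r - K)).
rewrite ltr_pdivrMr //; set n := _.+1%:R; lra.
Qed.

Section limn_esup_einf_bounds.
Context {R : realType}.
Implicit Types (u : (\bar R)^nat).
Local Open Scope ereal_scope.

Lemma limn_einf_gtNy_near u :
  -oo < limn_einf u -> exists r : R, \forall k \near \oo, r%:E <= u k.
Proof.
rewrite limn_einf_lim (cvg_lim _ (@cvg_einfs_sup R u)) //.
move=> /ereal_sup_gt[_ [N _ <-] uN].
have [r ru] : exists r : R, r%:E <= einfs u N.
  by case: (einfs u N) uN => [r _|_|];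
    [exists r | exists 0%R; rewrite leey | rewrite ltxx].
exists r; near=> k; apply: le_trans ru _; apply: ereal_inf_lbound; exists k => //.
by near: k; exists N.
Unshelve. all: by end_near. Qed.

Lemma limn_esup_ge_frequently u l :
  (forall N, exists2 n, (N <= n)%N & l <= u n) -> l <= limn_esup u.
Proof.
move=> freq; rewrite limn_esup_lim (cvg_lim _ (@cvg_esups_inf R u)) //.
apply: le_ereal_inf_tmp => _ [N _ <-]; have [n Nn lu] := freq N.
by apply: le_trans lu _; apply: ereal_sup_ubound; exists n.
Qed.

End limn_esup_einf_bounds.

Section fc.
Local Open Scope ereal_scope.
Context {R : realType}.
Implicit Types c u x : R.

Lemma fcE c u : fc c u = if cosc c u == 0%R then -oo else (ln (cosc c u))%:E.
Proof. by rewrite /fc /cosc normr_eq0. Qed.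

Lemma fc_le0 c u : fc c u <= 0.
Proof. by rewrite fcE; case: ifP => // _; rewrite lee_fin ln_le0 ?cosc_le1. Qed.

Lemma birkhoff_fcE c x n :
  (forall i, (i < n)%N -> (0 < cosc c (iter i Tdbl x))%R) ->
  birkhoff (fc c) x n = ((n%:R)^-1 * birkhoff_sum Tdbl (fun u => ln (cosc c u)) x n)%:E.
Proof.
move=> pos; rewrite /birkhoff /birkhoff_sum EFinM -sumEFin; congr (_ * _).
by apply: eq_bigr => i _; rewrite fcE gt_eqF ?pos.
Qed.

Lemma birkhoff_fc_Ny c x n i :
  (i < n)%N -> cosc c (iter i Tdbl x) = 0%R -> birkhoff (fc c) x n = -oo.
Proof.
move=> lt_in zero; rewrite /birkhoff (bigD1 (Ordinal lt_in)) //= fcE zero eqxx addNye.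
by rewrite muleC gt0_mulNye // lte_fin invr_gt0 ltr0n (leq_ltn_trans _ lt_in).
Qed.

Lemma chi_minus_orbit_bounds c y : -oo < chi_minus (fc c) y ->
  (forall j, (0 < cosc c (iter j Tdbl y))%R) /\
  exists2 C, (0 <= C)%R &
    forall n, (- C * n%:R <= birkhoff_sum Tdbl (fun u => ln (cosc c u)) y n)%R.
Proof.
move=> /limn_einf_gtNy_near[r [N _ hN]].
have pos j : (0 < cosc c (iter j Tdbl y))%R.
  rewrite lt0r cosc_ge0 andbT; apply/eqP => zero.
  have := hN (maxn N j.+1) (leq_maxl _ _).
  by rewrite (birkhoff_fc_Ny _ _ _ j) ?leq_maxr // leeNy_eq.
split=> //; apply: (@nonincreasing_linear_lbound _ _ r (maxn N 1)).
- by apply: birkhoff_sum_nonincreasing => u; rewrite ln_le0 ?cosc_le1.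
- exact: birkhoff_sum0.
move=> k; rewrite geq_max => /andP[Nk k0].
have := hN k Nk; rewrite birkhoff_fcE // lee_fin.
by rewrite ler_pdivlMl ?ltr0n // mulrC.
Qed.

End fc.

Section invariant_measure.
Local Open Scope ereal_scope.
Context {d : measure_display} {X : measurableType d} {phi : X -> X}.
Hypothesis mphi : measurable_fun setT phi.

Lemma measurable_iter k : measurable_fun setT (iter k phi).
Proof. by elim: k => [|k IH]; [exact: measurable_id | exact: measurableT_comp]. Qed.

Context {R : realType} (mu : {measure set X -> \bar R}).
Hypothesis phi_inv : forall A, measurable A -> mu (phi @^-1` A) = mu A.

Lemma ge0_integral_comp_invariant (f : X -> \bar R) :
  measurable_fun setT f -> (forall x, 0 <= f x) ->
  \int[mu]_x f (phi x) = \int[mu]_x f x.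
Proof.
move=> mf f0.
have := ge0_integral_pushforward mphi mu measurableT mf (fun y _ => f0 y).
rewrite preimage_setT => <-.
by apply: eq_measure_integral => A mA _ /=; rewrite /pushforward phi_inv.
Qed.

Lemma ge0_integral_iter_invariant (f : X -> \bar R) k :
  measurable_fun setT f -> (forall x, 0 <= f x) ->
  \int[mu]_x f (iter k phi x) = \int[mu]_x f x.
Proof.
move=> mf f0; elim: k => [//|k IH].
rewrite -IH -(ge0_integral_comp_invariant (f \o iter k phi)) //.
- by apply: eq_integral => x _; rewrite iterSr.
- exact: measurableT_comp mf (measurable_iter k).
- by move=> x; exact: f0.
Qed.

End invariant_measure.

Section birkhoff_sum_integral.
Local Open Scope ereal_scope.

Lemma ge0_integral_le_of_birkhoff_sum_le {d} {X : measurableType d} {R : realType}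
    (mu : probability X R) (phi : X -> X) (h : X -> R) (M K : R) :
  measurable_fun setT phi ->
  (forall A, measurable A -> mu (phi @^-1` A) = mu A) ->
  measurable_fun setT h -> (forall x, 0 <= h x)%R ->
  (forall n x, birkhoff_sum phi h x n <= M + K * n%:R)%R ->
  \int[mu]_x (h x)%:E <= K%:E.
Proof.
move=> mphi phi_inv mh h0 S_le.
have mhE : measurable_fun setT (fun x => (h x)%:E) by exact/measurable_EFinP.
have h0E x : 0 <= (h x)%:E by rewrite lee_fin.
have int_le n : (\int[mu]_x (h x)%:E) *+ n <= (M + K * n%:R)%:E.
  have <- : \int[mu]_x (birkhoff_sum phi h x n)%:E = (\int[mu]_x (h x)%:E) *+ n.
    under eq_integral do rewrite /birkhoff_sum -sumEFin.
    rewrite (@ge0_integral_sum _ _ _ mu setT measurableT _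
      (fun (k : 'I_n) x => (h (iter k phi x))%:E)) //; last first.
      by move=> k; exact: measurableT_comp mhE (measurable_iter mphi k).
    under eq_bigr do
      rewrite (ge0_integral_iter_invariant mphi mu phi_inv (fun x => (h x)%:E)) //.
    by rewrite sumr_const card_ord.
  apply: (@le_trans _ _ (\int[mu]_x (cst (M + K * n%:R)%:E) x)).
    apply: ge0_le_integral => //.
    - by move=> x _; rewrite lee_fin; apply: sumr_ge0 => k _.
    - apply/measurable_EFinP; apply: measurable_sum => k.
      exact: measurableT_comp mh (measurable_iter mphi k).
    - by move=> x _; rewrite lee_fin S_le.
  by rewrite integral_cst // [X in _ * X]probability_setT mule1.
have I0 : 0 <= \int[mu]_x (h x)%:E by apply: integral_ge0 => x _.
move: int_le (int_le 1%N) I0; case: (\int[mu]_x (h x)%:E) => [r r_le _ _| |//].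
  rewrite lee_fin; apply: (@le_of_forall_natmul_le _ _ M) => n.
  by have := r_le n; rewrite -EFin_natmul lee_fin [(r * _)%R]mulr_natr.
by move=> _; rewrite mulr1n leye_eq.
Qed.

End birkhoff_sum_integral.

Lemma measurable_Tdbl {R : realType} : measurable_fun setT (@Tdbl R).
Proof.
have mfloor : measurable_fun setT (fun x : R => (Num.floor x)%:~R : R).
  by apply: nondecreasing_measurable => // x y xy; rewrite ler_int le_floor.
have -> : @Tdbl R = *%R 2 \- (fun x => (Num.floor (2 * x))%:~R) by [].
by apply: measurable_funB => //; exact: measurableT_comp mfloor _.
Qed.

Definition lntrunc {R : realType} (c : R) (M : nat) (u : R) : R :=
  ln (Num.max (cosc c u) (expR (- M%:R))).

Section lntrunc.
Context {R : realType} (c : R).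
Implicit Types (M : nat) (u : R).

Let max_gt0 M u : 0 < Num.max (cosc c u) (expR (- M%:R)).
Proof. by rewrite lt_max expR_gt0 orbT. Qed.

Lemma measurable_cosc : measurable_fun setT (cosc c).
Proof.
apply: measurableT_comp => //; apply: measurableT_comp.
  exact: continuous_measurable_fun (@continuous_cos R).
by apply: measurableT_comp => //; exact: measurable_funD.
Qed.

Lemma measurable_lntrunc M : measurable_fun setT (lntrunc c M).
Proof.
rewrite /lntrunc; apply: measurableT_comp; first exact: measurable_ln.
exact: measurable_maxr measurable_cosc (measurable_cst _).
Qed.

Lemma lntrunc_le0 M u : lntrunc c M u <= 0.
Proof. by apply: ln_le0; rewrite ge_max cosc_le1 expR_le1 oppr_le0 ler0n. Qed.

Lemma lntrunc_ge M u : - M%:R <= lntrunc c M u.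
Proof. by rewrite -[leLHS]expRK ler_ln ?posrE ?expR_gt0 // le_max lexx orbT. Qed.

Lemma ln_cosc_le_lntrunc M u : 0 < cosc c u -> ln (cosc c u) <= lntrunc c M u.
Proof. by move=> cu0; rewrite ler_ln ?posrE // le_max lexx. Qed.

Lemma cosc_le_expR_lntrunc M u : cosc c u <= expR (lntrunc c M u).
Proof. by rewrite lnK ?posrE // le_max lexx. Qed.

Lemma lntrunc_nonincreasing u : nonincreasing_seq (lntrunc c ^~ u).
Proof.
move=> M M' MM'; rewrite ler_ln ?posrE // ge_max le_max lexx /= le_max.
by rewrite ler_expR lerN2 ler_nat MM' orbT.
Qed.

Lemma cvg_lntrunc u : ((- lntrunc c M u)%:E @[M --> \oo] --> - fc c u)%E.
Proof.
rewrite fcE; have [cu0|cu_neq0] := eqVneq (cosc c u) 0.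
  have -> : (fun M => (- lntrunc c M u)%:E) = (fun M => M%:R%:E).
    apply/funext => M; rewrite /lntrunc cu0 (_ : Num.max _ _ = expR (- M%:R)).
      by rewrite expRK opprK.
    by apply/max_idPr; rewrite expR_ge0.
  by apply/cvgenyP; exact: cvg_id.
have cu0 : 0 < cosc c u by rewrite lt_neqAle eq_sym cu_neq0 cosc_ge0.
apply: cvg_near_cst; near=> M; congr (- _)%:E.
rewrite /lntrunc; congr ln; apply/max_idPl.
rewrite -[leRHS]lnK ?posrE // ler_expR lerNl.
near: M; exists (Num.truncn (- ln (cosc c u))).+1 => // M /= ltM.
apply/ltW/(lt_le_trans (truncnS_gt _)); rewrite ler_nat; exact: ltM.
Unshelve. all: by end_near. Qed.

End lntrunc.

Section doubling_orbit_of_bpt.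
Context {R : realType} {c C : R}.
Hypothesis C_ge0 : 0 <= C.
Hypothesis orbit_gt0 : forall j, 0 < cosc c (iter j Tdbl (Tdbl (bpt c))).
Hypothesis orbit_sum_ge : forall n,
  - C * n%:R <= birkhoff_sum Tdbl (fun u => ln (cosc c u)) (Tdbl (bpt c)) n.

Local Notation a j := (cosc c (iter j Tdbl (Tdbl (bpt c)))).
Let L := ln 2 + C.

Let L_gt0 : 0 < L.
Proof. by rewrite /L -[0]addr0 ltr_leD // ln_gt0 // ltr1n. Qed.

Lemma ln_orbit_ge j : - C * j.+1%:R <= ln (a j).
Proof.
apply: le_trans (orbit_sum_ge j.+1) _.
rewrite -addn1 birkhoff_sumD {2}/birkhoff_sum big_ord1 gerDr.
by apply: sumr_le0 => i _; apply: ln_le0; exact: cosc_le1.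
Qed.

Lemma orbit_shadowing y t : cosc c y <= expR t ->
  exists p, (forall j, (j < p)%N -> a j / 2 <= cosc c (iter j.+1 Tdbl y)) /\
            - ln 2 - L * p.+1%:R <= t.
Proof.
move=> y_le; have L0 := L_gt0.
have exP : exists p : nat, - ln 2 < t + L * p.+1%:R.
  exists (Num.truncn ((- ln 2 - t) / L)).
  by have := truncnS_gt ((- ln 2 - t) / L); rewrite ltr_pdivrMr //; lra.
(* [p] is the first [j] with [t + L (j+1) > - ln 2]; below it, [2^(j+1) e^t <= a_j / 2]. *)
have [p Pp minp] := ex_minnP exP; exists p; split; last by lra.
move=> j jp; have a_gt0 := orbit_gt0 j.
have nPj : t + L * j.+1%:R <= - ln 2.
  by rewrite leNgt; apply/negP => /minp; rewrite leqNgt jp.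
have shadow : 2 ^+ j.+1 * cosc c y <= a j / 2.
  apply: (@le_trans _ _ (2 ^+ j.+1 * expR t)); first by rewrite ler_pM2l ?exprn_gt0.
  rewrite -[2 ^+ _](lnK (x := 2 ^+ j.+1)) ?posrE ?exprn_gt0 // -expRD.
  rewrite -[a j / 2]lnK ?posrE ?divr_gt0 // ler_expR lnXn // ln_div ?posrE //.
  have := ln_orbit_ge j; rewrite /L in nPj; rewrite -mulr_natr; lra.
have := cosc_iter_bpt_le c j.+1 y; rewrite iterSr; lra.
Qed.

Lemma shadowing_block (phi : R -> R) y :
  (forall u, 0 < cosc c u -> ln (cosc c u) <= phi u) ->
  cosc c y <= expR (phi y) ->
  exists2 m, (0 < m)%N &
    - (2 * L) * m%:R <= birkhoff_sum Tdbl phi y m /\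
    forall i, (0 < i <= m)%N -> phi y - 2 * L * i%:R <= birkhoff_sum Tdbl phi y i.
Proof.
move=> phi_ge y_le; have [p [shadow t_ge]] := orbit_shadowing _ _ y_le.
have L0 := L_gt0.
have prefix i : (i <= p)%N -> phi y - L * i%:R <= birkhoff_sum Tdbl phi y i.+1.
  move=> ip; rewrite -add1n birkhoff_sumD {1}/birkhoff_sum big_ord1 lerD2l.
  apply: (@le_trans _ _ (\sum_(k < i) (ln (a k) - ln 2))).
    rewrite sumrB sumr_const card_ord -mulr_natr; have := orbit_sum_ge i.
    by rewrite /birkhoff_sum /L; lra.
  apply: ler_sum => k _; have /shadow ak_le : (k < p)%N by apply: leq_trans ip.
  have ak_gt0 := orbit_gt0 k.
  have yk_gt0 : 0 < cosc c (iter k.+1 Tdbl y).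
    by apply: lt_le_trans ak_le; rewrite divr_gt0.
  have -> : iter k Tdbl (iter 1 Tdbl y) = iter k.+1 Tdbl y by rewrite [RHS]iterSr.
  rewrite -ln_div ?posrE //; apply: le_trans (phi_ge _ yk_gt0).
  by rewrite ler_ln ?posrE ?divr_gt0.
exists p.+1 => //; split.
  have ln2_le_L : ln 2 <= L by rewrite /L lerDl.
  by apply: le_trans (prefix p (leqnn p)); move: t_ge; rewrite -natr1; lra.
case=> [//|i] /andP[_ ip]; apply: le_trans (prefix i ip).
have : 0 <= L * i%:R by rewrite mulr_ge0 ?ler0n ?ltW.
by rewrite -natr1; lra.
Qed.

Lemma birkhoff_sum_lntrunc_ge M n y :
  - M%:R - 2 * L * n%:R <= birkhoff_sum Tdbl (lntrunc c M) y n.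
Proof.
apply: birkhoff_sum_ge_of_blocks => // x.
have [m m0 [Sm Si]] :=
  shadowing_block _ _ (ln_cosc_le_lntrunc c M) (cosc_le_expR_lntrunc c M x).
exists m => //; split=> // i /Si; have := lntrunc_ge c M x; lra.
Qed.

Lemma birkhoff_sum_ln_cosc_frequently_ge x :
  (forall k, 0 < cosc c (iter k Tdbl x)) ->
  forall N, exists2 n, (N <= n)%N &
    - (2 * L) * n%:R <= birkhoff_sum Tdbl (fun u => ln (cosc c u)) x n.
Proof.
move=> x_gt0; apply: birkhoff_sum_frequently_ge => n.
have y_le : cosc c (iter n Tdbl x) <= expR (ln (cosc c (iter n Tdbl x))).
  by rewrite lnK ?posrE.
have [m m0 [Sm _]] := shadowing_block _ _ (fun u _ => lexx _) y_le.
by exists m.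
Qed.

Local Open Scope ereal_scope.

Lemma chi_plus_fc_ge x : (forall k, (0 < cosc c (iter k Tdbl x))%R) ->
  (- (2 * L))%:E <= chi_plus (fc c) x.
Proof.
move=> x_gt0; apply: limn_esup_ge_frequently => N.
have [n Nn Sn] := birkhoff_sum_ln_cosc_frequently_ge _ x_gt0 (maxn N 1).
rewrite geq_max in Nn; case/andP: Nn => Nn n_gt0.
exists n => //; rewrite birkhoff_fcE // lee_fin.
by rewrite ler_pdivlMl ?ltr0n // mulrC.
Qed.

Lemma integral_fc_ge (mu : probability R R) : invariant_prob mu ->
  (- (2 * L))%:E <= \int[mu]_x fc c x.
Proof.
move=> mu_inv.
have mtrunc M : measurable_fun setT (fun x => (- lntrunc c M x)%:E).
  by apply/measurable_EFinP; exact: measurable_funN (measurable_lntrunc c M).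
have trunc_ge0 M x : 0 <= (- lntrunc c M x)%:E by rewrite lee_fin oppr_ge0 lntrunc_le0.
have int_trunc M : \int[mu]_x (- lntrunc c M x)%:E <= (2 * L)%:E.
  apply: (ge0_integral_le_of_birkhoff_sum_le mu Tdbl _ M%:R) => //.
  - exact: measurable_Tdbl.
  - exact: measurable_funN (measurable_lntrunc c M).
  - by move=> x; rewrite oppr_ge0 lntrunc_le0.
  - move=> n x; rewrite /birkhoff_sum sumrN.
    by have := birkhoff_sum_lntrunc_ge M n x; rewrite /birkhoff_sum; lra.
have int_Nfc : \int[mu]_x (- fc c x) <= (2 * L)%:E.
  under eq_integral do rewrite -(cvg_lim _ (cvg_lntrunc c _)) //.
  rewrite monotone_convergence //.
  - apply: lime_le; last exact: nearW.
    apply: ereal_nondecreasing_is_cvgn => M M' MM'.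
    apply: ge0_le_integral => // x _.
    by rewrite lee_fin lerN2 lntrunc_nonincreasing.
  - by move=> x _ M M' MM'; rewrite lee_fin lerN2 lntrunc_nonincreasing.
have -> : \int[mu]_x fc c x = - \int[mu]_x (- fc c x).
  rewrite -integral_ge0N; last by move=> x _; rewrite oppe_ge0 fc_le0.
  by under eq_integral do rewrite oppeK.
by rewrite EFinN leeN2.
Qed.

End doubling_orbit_of_bpt.

Theorem proposition2p3 (R : realType) (c : R) (hc0 : 0 <= c) (hc1 : c < 1)
  (hchi : (-oo < chi_minus (fc c) (Tdbl (bpt c)))%E) :
  exists K : R, 0 < K /\
    (forall x : R, 0 <= x < 1 ->
       (exists n : nat, iter n Tdbl x = bpt c) \/ ((- K)%:E < chi_plus (fc c) x)%E) /\
    ((- K)%:E <= alpha c)%E.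
Proof.
have [orbit_gt0 [C C_ge0 orbit_sum_ge]] := chi_minus_orbit_bounds _ _ hchi.
have K_ge0 : 0 <= 2 * (ln 2 + C) by rewrite mulr_ge0 // addr_ge0 // ln_ge0 // ler1n.
exists (2 * (ln 2 + C) + 1); split; first by lra.
have ltK : ((- (2 * (ln 2 + C) + 1))%:E < (- (2 * (ln 2 + C)))%:E)%E.
  by rewrite lte_fin; lra.
split.
  move=> x x01; have [|avoid] := pselect (exists n, iter n Tdbl x = bpt c); first by left.
  right; apply: lt_le_trans ltK (chi_plus_fc_ge C_ge0 orbit_gt0 orbit_sum_ge _ _).
  exact: cosc_orbit_gt0 x01 avoid.
apply: le_ereal_inf_tmp => _ [mu mu_inv <-]; apply: (le_trans (ltW ltK)).
exact: integral_fc_ge.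
Qed.
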